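(* Under the assumptions of the explicit-formulae proposition (piecewise linear concave non-positive increasing $v$ on grid $x_1<\dots<x_N$, $-\infty$ below $x_1$ and constant above $x_N$; $u$ concave increasing with $u^\dagger$ continuous on $(0,\infty)$ and $\lim_{p\to0}u^\dagger(p)=\infty$; $s\in(0,1)$), $\lim_{\eta\to\infty}X^\eta=\gamma_{\min}+s^Ce^{-r\delta t}x_1$.
   Context: $\gamma_{\min}=\inf\{x:u(x)>-\infty\}$. $\Phi$ is the standard normal distribution function, $M=|\mu-r|\sqrt{\delta t}/\sigma$, $Q(x)=\Phi(M+\Phi^{-1}(x))$, $q^A_{BS}=Q'$. For concave increasing $g$, $g^\dagger(p)=\inf\{x:p\in\partial g(x)\}$, $\partial g$ the superdifferential. $C\in\{0,1\}$. For $\eta>0$: $f^\eta(x)=v^\dagger(\eta s^{C-1}e^{-r\delta t}q^A_{BS}(x))$, $\gamma^\eta=u^\dagger\big(-\frac{\eta}{\delta t}\big(-1+s\int_0^1(1+v(f^\eta(x)))\mathrm dx\big)^{-1}\big)$, $X^\eta=\gamma^\eta+s^C\int_0^1e^{-r\delta t}q^A_{BS}(x)f^\eta(x)\mathrm dx$. *)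

From Stdlib Require Import Reals Lra ClassicalEpsilon.
Open Scope R_scope.

Definition inhR : inhabited R := inhabits 0.

(** Extended-real valued functions R -> [-oo, +oo) : value [val x] on the
    effective domain [dom], and -oo outside of it. *)
Record efun := mkEfun { edom : R -> Prop; eval : R -> R }.

Definition econcave (g : efun) : Prop :=
  forall x y t, edom g x -> edom g y -> 0 <= t <= 1 ->
    edom g (t * x + (1 - t) * y) /\
    t * eval g x + (1 - t) * eval g y <= eval g (t * x + (1 - t) * y).

Definition eincreasing (g : efun) : Prop :=
  forall x y, x <= y -> edom g x -> edom g y /\ eval g x <= eval g y.

Definition superdiff (g : efun) (x p : R) : Prop :=
  edom g x /\ forall y, edom g y -> eval g y <= eval g x + p * (y - x).

Definition is_lower_bound (E : R -> Prop) (m : R) : Prop :=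
  forall x, E x -> m <= x.
Definition is_glb (E : R -> Prop) (m : R) : Prop :=
  is_lower_bound E m /\ forall b, is_lower_bound E b -> b <= m.

(** g^dagger(p) = inf { x : p in superdiff g x }  (when this inf is finite). *)
Definition dagger (g : efun) (p : R) : R :=
  epsilon inhR (is_glb (fun x => superdiff g x p)).

Definition phi (t : R) : R := / sqrt (2 * PI) * exp (- (t * t) / 2).

Definition Phi_spec (x l : R) : Prop :=
  (forall a, a <= x -> inhabited (Riemann_integrable phi a x)) /\
  forall eps, eps > 0 -> exists A, forall a (pr : Riemann_integrable phi a x),
    a < A -> Rabs (RiemannInt pr - l) < eps.

Definition Phi (x : R) : R := epsilon inhR (Phi_spec x).
Definition PhiInv (y : R) : R := epsilon inhR (fun z => Phi z = y).

Definition Mpar (mu r sigma dt : R) : R := Rabs (mu - r) * sqrt dt / sigma.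
Definition Qfun (M x : R) : R := Phi (M + PhiInv x).
Definition qBS (M x : R) : R := epsilon inhR (fun l => derivable_pt_lim (Qfun M) x l).

Definition improper_int01 (h : R -> R) (I : R) : Prop :=
  (forall a b, 0 < a -> a <= b -> b < 1 -> inhabited (Riemann_integrable h a b)) /\
  forall eps, eps > 0 -> exists d, d > 0 /\
    forall a b (pr : Riemann_integrable h a b),
      0 < a < d -> 1 - d < b < 1 -> Rabs (RiemannInt pr - I) < eps.

Definition int01 (h : R -> R) : R := epsilon inhR (improper_int01 h).

Definition fEta (v : efun) (mu r sigma dt s : R) (C : nat) (eta x : R) : R :=
  dagger v (eta * powerRZ s (Z.of_nat C - 1) * exp (- r * dt)
               * qBS (Mpar mu r sigma dt) x).

Definition gammaEta (u v : efun) (mu r sigma dt s : R) (C : nat) (eta : R) : R :=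
  dagger u (- (eta / dt) *
    / (-1 + s * int01 (fun x => 1 + eval v (fEta v mu r sigma dt s C eta x)))).

Definition XEta (u v : efun) (mu r sigma dt s : R) (C : nat) (eta : R) : R :=
  gammaEta u v mu r sigma dt s C eta
  + s ^ C * int01 (fun x => exp (- r * dt) * qBS (Mpar mu r sigma dt) x
                            * fEta v mu r sigma dt s C eta x).

Definition lim_pinfty (F : R -> R) (l : R) : Prop :=
  forall eps, eps > 0 -> exists K, forall eta, eta > K -> Rabs (F eta - l) < eps.
Definition to_minfty_at_pinfty (F : R -> R) : Prop :=
  forall m, exists K, forall eta, eta > K -> F eta < m.

(* For large [eta] the slope [eta c q(x)] (with [c = s^{C-1} e^{-r dt}]) defining
   [f^eta(x) = v^dagger(eta c q(x))] exceeds, uniformly on any (0, b0] (as q is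
   nonincreasing), the threshold beyond which [v^dagger] returns its smallest grid point
   [x_1]. Since [v^dagger] only takes grid values and [q] has total mass 1, the discounted
   mean [int e^{-r dt} q f^eta] tends to [e^{-r dt} x_1]. Meanwhile [int (1 + v(f^eta))]
   stays in [[1 + v(x_1), 1]], so the argument of [u^dagger] in [gamma^eta] grows at least
   linearly in [eta], and [u^dagger(p)] tends to the infimum [gamma_min] of the domain of
   [u] as [p -> oo] (to [-oo] if that domain is unbounded below). The formula
   [q = exp(-M^2/2 - M Phi^{-1})] and the total mass of [q] rest on the Gaussian integral
   [int_0^oo e^{-t^2} = sqrt(pi)/2]. *)

From Coquelicot Require Import Coquelicot.
From Stdlib Require Import Reals Lra Lia ClassicalEpsilon Classical List.
Open Scope R_scope.

Lemma ex_RInt_continuous_R (f : R -> R) a b : (forall z, continuous f z) -> ex_RInt f a b.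
Proof. intros; apply (ex_RInt_continuous (V:=R_CompleteNormedModule)); auto. Qed.

Lemma RInt_Chasles_R (f : R -> R) a b c :
  ex_RInt f a b -> ex_RInt f b c -> RInt f a b + RInt f b c = RInt f a c.
Proof. intros; apply (RInt_Chasles (V:=R_CompleteNormedModule)); auto. Qed.

Lemma RInt_scal_R (f : R -> R) a b c :
  ex_RInt f a b -> RInt (fun x => c * f x) a b = c * RInt f a b.
Proof. intros; apply (RInt_scal (V:=R_CompleteNormedModule) f a b c); auto. Qed.

Lemma RInt_const_R a b c : RInt (fun _ => c) a b = (b - a) * c.
Proof. rewrite (RInt_const (V:=R_CompleteNormedModule)); reflexivity. Qed.

Lemma exp_le_compat x y : x <= y -> exp x <= exp y.
Proof. intros [H|H]; [left; apply exp_increasing | right; subst]; auto. Qed.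

Lemma ex_derive_continuity_pt (f : R -> R) x : ex_derive f x -> continuity_pt f x.
Proof. intros; apply continuity_pt_filterlim, (ex_derive_continuous (V:=R_NormedModule)); auto. Qed.

(** * The Gaussian integral *)

Definition gauss (t : R) : R := exp (- (t * t)).
Definition gauss_int (x : R) : R := RInt gauss 0 x.
Definition gauss_kernel (t y : R) : R := exp (- (t * t) * (1 + y * y)) / (1 + y * y).
Definition gauss_kernel_int (t : R) : R := RInt (gauss_kernel t) 0 1.

Lemma one_plus_sqr_pos y : 0 < 1 + y * y.
Proof. nra. Qed.

Lemma gauss_continuous x : continuous gauss x.
Proof. apply (ex_derive_continuous (V:=R_NormedModule)); unfold gauss; auto_derive; auto. Qed.

Lemma ex_RInt_gauss a b : ex_RInt gauss a b.
Proof. apply ex_RInt_continuous_R, gauss_continuous. Qed.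

Lemma gauss_int_derive x : is_derive gauss_int x (gauss x).
Proof.
  apply is_derive_RInt with (a := 0).
  - apply filter_forall; intro; apply (RInt_correct (V:=R_CompleteNormedModule)), ex_RInt_gauss.
  - apply gauss_continuous.
Qed.

Lemma gauss_kernel_derive t y :
  is_derive (fun z => gauss_kernel z y) t (-2 * t * exp (- (t * t) * (1 + y * y))).
Proof.
  unfold gauss_kernel; pose proof (one_plus_sqr_pos y).
  auto_derive; [lra | field; lra].
Qed.

Lemma gauss_kernel_continuous t y : continuous (gauss_kernel t) y.
Proof.
  apply (ex_derive_continuous (V:=R_NormedModule)); unfold gauss_kernel; auto_derive.
  pose proof (one_plus_sqr_pos y); lra.
Qed.

Lemma ex_RInt_gauss_kernel t a b : ex_RInt (gauss_kernel t) a b.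
Proof. apply ex_RInt_continuous_R, gauss_kernel_continuous. Qed.

(* Differentiation under the integral sign, then the substitution z = t y. *)
Lemma gauss_kernel_int_derive t : is_derive gauss_kernel_int t (-2 * gauss t * gauss_int t).
Proof.
  unfold gauss_kernel_int.
  replace (-2 * gauss t * gauss_int t)
    with (RInt (fun y => Derive (fun z => gauss_kernel z y) t) 0 1).
  - apply is_derive_RInt_param.
    + apply filter_forall; intros z y _; eexists; apply gauss_kernel_derive.
    + intros y _.
      apply continuity_2d_pt_ext with (fun z w => -2 * z * exp (- (z * z) * (1 + w * w))).
      { intros; symmetry; apply is_derive_unique, gauss_kernel_derive. }
      apply continuity_2d_pt_mult.
      * apply continuity_2d_pt_mult; [apply continuity_2d_pt_const | apply continuity_2d_pt_id1].
      * apply continuity_1d_2d_pt_comp with (f := exp).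
        { apply derivable_continuous_pt, derivable_pt_exp. }
        apply continuity_2d_pt_mult.
        { apply continuity_2d_pt_opp, continuity_2d_pt_mult; apply continuity_2d_pt_id1. }
        apply continuity_2d_pt_plus; [apply continuity_2d_pt_const|].
        apply continuity_2d_pt_mult; apply continuity_2d_pt_id2.
    + apply filter_forall; intro; apply ex_RInt_gauss_kernel.
  - rewrite (RInt_ext _ (fun y => scal (-2 * gauss t) (scal t (gauss (t * y + 0))))).
    + rewrite (RInt_scal (V:=R_CompleteNormedModule)).
      * rewrite (RInt_comp_lin (V:=R_CompleteNormedModule)) by apply ex_RInt_gauss.
        unfold gauss_int; rewrite Rmult_0_r, Rplus_0_r, Rmult_1_r, Rplus_0_r; reflexivity.
      * apply (ex_RInt_comp_lin (V:=R_NormedModule)), ex_RInt_gauss.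
    + intros y _; generalize (is_derive_unique _ _ _ (gauss_kernel_derive t y)); simpl; intros ->.
      unfold gauss, scal; simpl; unfold mult; simpl.
      replace (- (t * t) * (1 + y * y)) with (- (t * t) + - ((t * y + 0) * (t * y + 0))) by ring.
      rewrite exp_plus; ring.
Qed.

(* The derivative of [gauss_int t ^ 2 + gauss_kernel_int t] vanishes, and its value
   at [t = 0] is [atan 1]. *)
Lemma gauss_identity t : gauss_int t * gauss_int t + gauss_kernel_int t = PI / 4.
Proof.
  set (F := fun t => gauss_int t * gauss_int t + gauss_kernel_int t).
  assert (dF : forall t, is_derive F t 0).
  { intro z; unfold F.
    replace 0 with (gauss z * gauss_int z + gauss_int z * gauss z + (-2 * gauss z * gauss_int z))
      by ring.
    apply (is_derive_plus (K:=R_AbsRing) (V:=R_NormedModule)); [|apply gauss_kernel_int_derive].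
    apply (is_derive_mult (K:=R_AbsRing)); try apply gauss_int_derive.
    intros; apply Rmult_comm. }
  assert (F0 : F 0 = PI / 4).
  { unfold F, gauss_int, gauss_kernel_int.
    rewrite (RInt_point (V:=R_CompleteNormedModule)), <- atan_1.
    replace (atan 1) with (atan 1 - atan 0) by (rewrite atan_0; ring).
    change zero with 0; rewrite Rmult_0_l, Rplus_0_l.
    apply is_RInt_unique, (is_RInt_derive (V:=R_CompleteNormedModule) atan).
    - intros y _; apply is_derive_Reals.
      replace (gauss_kernel 0 y) with (/ (1 + y ^ 2)); [apply derivable_pt_lim_atan|].
      unfold gauss_kernel; rewrite Rmult_0_l, Ropp_0, Rmult_0_l, exp_0.
      pose proof (one_plus_sqr_pos y); simpl; field; lra.
    - intros; apply gauss_kernel_continuous. }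
  destruct (MVT_gen F 0 t (fun _ => 0)) as [c [_ Hc]].
  - intros; apply dF.
  - intros; apply ex_derive_continuity_pt; eexists; apply dF.
  - fold (F t); lra.
Qed.

Lemma gauss_kernel_int_pos t : 0 < gauss_kernel_int t.
Proof.
  apply RInt_gt_0; [lra | | intros; apply gauss_kernel_continuous].
  intros y _; unfold gauss_kernel; apply Rdiv_lt_0_compat; [apply exp_pos | apply one_plus_sqr_pos].
Qed.

Lemma gauss_kernel_int_le t : gauss_kernel_int t <= gauss t.
Proof.
  replace (gauss t) with (RInt (fun _ => gauss t) 0 1) by (rewrite RInt_const_R; lra).
  apply RInt_le; [lra | apply ex_RInt_gauss_kernel | apply ex_RInt_const |].
  intros y _; unfold gauss_kernel, gauss.
  pose proof (one_plus_sqr_pos y).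
  assert (exp (- (t * t) * (1 + y * y)) <= exp (- (t * t))).
  { apply exp_le_compat; assert (0 <= t * t * (y * y)) by (apply Rmult_le_pos; nra); nra. }
  apply Rle_trans with (exp (- (t * t) * (1 + y * y))); [|lra].
  unfold Rdiv; rewrite <- (Rmult_1_r (exp _)) at 2.
  apply Rmult_le_compat_l; [apply Rlt_le, exp_pos|].
  rewrite <- Rinv_1; apply Rinv_le_contravar; nra.
Qed.

Lemma sqrt_PI_half_sqr : sqrt PI / 2 * (sqrt PI / 2) = PI / 4.
Proof.
  replace (PI / 4) with (sqrt PI * sqrt PI / 4)
    by (rewrite sqrt_sqrt; [field | pose proof PI_RGT_0; lra]).
  field.
Qed.

Lemma gauss_int_bounds x : 0 <= x -> 0 <= gauss_int x < sqrt PI / 2.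
Proof.
  intros Hx.
  assert (G0 : 0 <= gauss_int x).
  { apply RInt_ge_0; auto; [apply ex_RInt_gauss | intros; apply Rlt_le, exp_pos]. }
  split; auto.
  pose proof (gauss_identity x); pose proof (gauss_kernel_int_pos x); pose proof sqrt_PI_half_sqr.
  assert (0 < sqrt PI) by apply sqrt_lt_R0, PI_RGT_0.
  nra.
Qed.

Lemma gauss_small eps : 0 < eps -> exists K, forall x, x > K -> gauss x < eps.
Proof.
  intros He; exists (Rmax 1 (Rabs (ln eps))); intros x Hx.
  pose proof (Rmax_l 1 (Rabs (ln eps))); pose proof (Rmax_r 1 (Rabs (ln eps))).
  pose proof (Rle_abs (- ln eps)); rewrite Rabs_Ropp in *.
  unfold gauss; rewrite <- (exp_ln eps) by auto; apply exp_increasing; nra.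
Qed.

Lemma gauss_int_cvg eps : 0 < eps ->
  exists K, forall x, x > K -> Rabs (gauss_int x - sqrt PI / 2) < eps.
Proof.
  intros He.
  assert (Hs : 0 < sqrt PI / 2) by (pose proof (sqrt_lt_R0 PI PI_RGT_0); lra).
  destruct (gauss_small (eps * (sqrt PI / 2))) as [K HK]; [nra|].
  exists (Rmax 0 K); intros x Hx.
  pose proof (Rmax_l 0 K); pose proof (Rmax_r 0 K).
  pose proof (HK x ltac:(lra)); pose proof (gauss_identity x).
  pose proof (gauss_kernel_int_le x); pose proof (gauss_int_bounds x ltac:(lra)).
  pose proof sqrt_PI_half_sqr.
  (* [(sqrt PI/2 - G)(sqrt PI/2 + G) = gauss_kernel_int x <= gauss x] *)
  rewrite Rabs_left by lra; nra.
Qed.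

(** * The standard normal distribution function and its inverse *)

Definition normal_int (x : R) : R := RInt phi 0 x.

Lemma sqrt_2PI_pos : 0 < sqrt (2 * PI).
Proof. apply sqrt_lt_R0; pose proof PI_RGT_0; lra. Qed.

Lemma phi_pos t : 0 < phi t.
Proof. apply Rmult_lt_0_compat; [apply Rinv_0_lt_compat, sqrt_2PI_pos | apply exp_pos]. Qed.

Lemma phi_continuous x : continuous phi x.
Proof. apply (ex_derive_continuous (V:=R_NormedModule)); unfold phi; auto_derive; auto. Qed.

Lemma ex_RInt_phi a b : ex_RInt phi a b.
Proof. apply ex_RInt_continuous_R, phi_continuous. Qed.

Lemma normal_int_gauss x : normal_int x = gauss_int (/ sqrt 2 * x) / sqrt PI.
Proof.
  assert (h2 : 0 < sqrt 2) by (apply sqrt_lt_R0; lra).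
  assert (hP : 0 < sqrt PI) by apply sqrt_lt_R0, PI_RGT_0.
  unfold normal_int, gauss_int.
  replace (/ sqrt 2 * x) with (/ sqrt 2 * x + 0) by ring.
  replace 0 with (/ sqrt 2 * 0 + 0) at 2 by ring.
  rewrite <- (RInt_comp_lin (V:=R_CompleteNormedModule)) by apply ex_RInt_gauss.
  unfold Rdiv; rewrite Rmult_comm, <- RInt_scal_R
    by apply (ex_RInt_comp_lin (V:=R_NormedModule)), ex_RInt_gauss.
  apply RInt_ext; intros t _; unfold scal, phi, gauss; simpl; unfold mult; simpl.
  replace (- ((/ sqrt 2 * t + 0) * (/ sqrt 2 * t + 0))) with (- (t * t) / 2).
  - rewrite sqrt_mult by (pose proof PI_RGT_0; lra); field; lra.
  - replace ((/ sqrt 2 * t + 0) * (/ sqrt 2 * t + 0)) with (t * t / (sqrt 2 * sqrt 2))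
      by (field; lra).
    rewrite sqrt_sqrt by lra; field.
Qed.

Lemma normal_int_odd x : normal_int (- x) = - normal_int x.
Proof.
  unfold normal_int.
  replace (- x) with (-1 * x + 0) by ring; replace 0 with (-1 * 0 + 0) at 1 by ring.
  rewrite <- (RInt_comp_lin (V:=R_CompleteNormedModule)) by apply ex_RInt_phi.
  rewrite (RInt_ext _ (fun y => -1 * phi y)).
  - rewrite RInt_scal_R by apply ex_RInt_phi; replace (-1 * 0 + 0) with 0 by ring; ring.
  - intros y _; unfold scal, phi; simpl; unfold mult; simpl.
    replace ((-1 * y + 0) * (-1 * y + 0)) with (y * y) by ring; reflexivity.
Qed.

Lemma normal_int_bound x : Rabs (normal_int x) < / 2.
Proof.
  assert (hP : 0 < sqrt PI) by apply sqrt_lt_R0, PI_RGT_0.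
  assert (H : forall x, 0 <= x -> 0 <= normal_int x < / 2).
  { intros y Hy; rewrite normal_int_gauss.
    assert (0 <= / sqrt 2 * y)
      by (apply Rmult_le_pos; [apply Rlt_le, Rinv_0_lt_compat, sqrt_lt_R0|]; lra).
    destruct (gauss_int_bounds (/ sqrt 2 * y)) as [G0 G1]; auto.
    split; [apply Rdiv_le_0_compat; lra|].
    apply Rmult_lt_reg_r with (sqrt PI); auto; unfold Rdiv.
    rewrite Rmult_assoc, Rinv_l by lra; lra. }
  destruct (Rle_or_lt 0 x) as [Hx|Hx].
  - destruct (H x Hx); rewrite Rabs_pos_eq; lra.
  - rewrite <- (Ropp_involutive x), normal_int_odd, Rabs_Ropp.
    destruct (H (- x)); [lra|]; rewrite Rabs_pos_eq; lra.
Qed.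

Lemma normal_int_cvg_pinfty eps : 0 < eps ->
  exists K, forall x, x > K -> Rabs (normal_int x - / 2) < eps.
Proof.
  intros He.
  assert (h2 : 0 < sqrt 2) by (apply sqrt_lt_R0; lra).
  assert (hP : 0 < sqrt PI) by apply sqrt_lt_R0, PI_RGT_0.
  destruct (gauss_int_cvg (eps * sqrt PI)) as [K HK]; [nra|].
  exists (sqrt 2 * K); intros x Hx; rewrite normal_int_gauss.
  replace (gauss_int (/ sqrt 2 * x) / sqrt PI - / 2)
    with ((gauss_int (/ sqrt 2 * x) - sqrt PI / 2) / sqrt PI) by (field; lra).
  unfold Rdiv; rewrite Rabs_mult, (Rabs_pos_eq (/ sqrt PI)) by (left; apply Rinv_0_lt_compat; lra).
  apply Rmult_lt_reg_r with (sqrt PI); auto.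
  rewrite Rmult_assoc, Rinv_l, Rmult_1_r by lra.
  apply HK, Rmult_lt_reg_l with (sqrt 2); auto.
  rewrite <- Rmult_assoc, Rinv_r, Rmult_1_l by lra; lra.
Qed.

Lemma normal_int_cvg_minfty eps : 0 < eps ->
  exists K, forall x, x < K -> Rabs (normal_int x + / 2) < eps.
Proof.
  intros He; destruct (normal_int_cvg_pinfty eps He) as [K HK].
  exists (- K); intros x Hx.
  replace (normal_int x + / 2) with (- (normal_int (- x) - / 2)) by (rewrite normal_int_odd; ring).
  rewrite Rabs_Ropp; apply HK; lra.
Qed.

Lemma Phi_spec_unique x l1 l2 : Phi_spec x l1 -> Phi_spec x l2 -> l1 = l2.
Proof.
  intros [Hi H1] [_ H2].
  destruct (Req_dec l1 l2) as [|Hne]; auto; exfalso.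
  assert (Hd : 0 < Rabs (l1 - l2) / 2) by (apply Rdiv_lt_0_compat; [apply Rabs_pos_lt|]; lra).
  destruct (H1 _ Hd) as [A1 HA1]; destruct (H2 _ Hd) as [A2 HA2].
  set (a := Rmin (Rmin A1 A2) x - 1).
  pose proof (Rmin_l (Rmin A1 A2) x); pose proof (Rmin_r (Rmin A1 A2) x).
  pose proof (Rmin_l A1 A2); pose proof (Rmin_r A1 A2).
  destruct (Hi a ltac:(unfold a; lra)) as [pr].
  pose proof (HA1 a pr ltac:(unfold a; lra)); pose proof (HA2 a pr ltac:(unfold a; lra)).
  pose proof (Rabs_triang (RiemannInt pr - l2) (- (RiemannInt pr - l1))).
  rewrite Rabs_Ropp in *.
  replace (RiemannInt pr - l2 + - (RiemannInt pr - l1)) with (l1 - l2) in * by ring.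
  lra.
Qed.

Lemma Phi_eq x : Phi x = / 2 + normal_int x.
Proof.
  assert (Hs : Phi_spec x (/ 2 + normal_int x)).
  { split.
    - intros a _; constructor; apply ex_RInt_Reals_0, ex_RInt_phi.
    - intros eps He; destruct (normal_int_cvg_minfty eps He) as [K HK].
      exists K; intros a pr Ha; rewrite <- RInt_Reals.
      rewrite <- (RInt_Chasles_R phi a 0 x), <- (opp_RInt_swap (V:=R_CompleteNormedModule))
        by apply ex_RInt_phi.
      change (Rabs (- normal_int a + normal_int x - (/ 2 + normal_int x)) < eps).
      replace (- normal_int a + normal_int x - (/ 2 + normal_int x)) with (- (normal_int a + / 2))
        by ring.
      rewrite Rabs_Ropp; apply HK; lra. }
  apply (Phi_spec_unique x); auto.
  apply (epsilon_spec inhR (Phi_spec x)); eauto.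
Qed.

Lemma Phi_derive x : is_derive Phi x (phi x).
Proof.
  apply is_derive_ext with (fun t => / 2 + normal_int t); [intros; rewrite Phi_eq; reflexivity|].
  replace (phi x) with (0 + phi x) by ring.
  apply (is_derive_plus (K:=R_AbsRing) (V:=R_NormedModule));
    [apply (is_derive_const (K:=R_AbsRing) (V:=R_NormedModule))|].
  apply is_derive_RInt with (a := 0).
  - apply filter_forall; intro; apply (RInt_correct (V:=R_CompleteNormedModule)), ex_RInt_phi.
  - apply phi_continuous.
Qed.

Lemma Phi_continuity : continuity Phi.
Proof. intro; apply ex_derive_continuity_pt; eexists; apply Phi_derive. Qed.

Lemma Phi_bounds x : 0 < Phi x < 1.
Proof. rewrite Phi_eq; pose proof (normal_int_bound x) as H; apply Rabs_def2 in H; lra. Qed.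

Lemma Phi_increasing x y : x < y -> Phi x < Phi y.
Proof.
  intros Hxy; destruct (MVT_gen Phi x y phi) as [c [_ Hc]].
  - intros; apply Phi_derive.
  - intros; apply Phi_continuity.
  - pose proof (phi_pos c); nra.
Qed.

Lemma Phi_le x y : x <= y -> Phi x <= Phi y.
Proof. intros [H|H]; [left; apply Phi_increasing | right; subst]; auto. Qed.

Lemma Phi_near_1 eps : 0 < eps -> exists K, forall x, x > K -> 1 - eps < Phi x.
Proof.
  intros He; destruct (normal_int_cvg_pinfty eps He) as [K HK].
  exists K; intros x Hx; rewrite Phi_eq; pose proof (HK x Hx) as H; apply Rabs_def2 in H; lra.
Qed.

Lemma Phi_near_0 eps : 0 < eps -> exists K, forall x, x < K -> Phi x < eps.
Proof.
  intros He; destruct (normal_int_cvg_minfty eps He) as [K HK].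
  exists K; intros x Hx; rewrite Phi_eq; pose proof (HK x Hx) as H; apply Rabs_def2 in H; lra.
Qed.

Lemma Phi_PhiInv y : 0 < y < 1 -> Phi (PhiInv y) = y.
Proof.
  intros Hy; apply (epsilon_spec inhR (fun z => Phi z = y)).
  destruct (Phi_near_1 (1 - y)) as [K1 HK1]; [lra|].
  destruct (Phi_near_0 y) as [K2 HK2]; [lra|].
  pose proof (HK1 (K1 + 1) ltac:(lra)); pose proof (HK2 (K2 - 1) ltac:(lra)).
  destruct (IVT_gen Phi (K2 - 1) (K1 + 1) y Phi_continuity) as [z [_ Hz]]; eauto.
  split; [apply Rle_trans with (Phi (K2 - 1)); [apply Rmin_l | lra]
         |apply Rle_trans with (Phi (K1 + 1)); [lra | apply Rmax_r]].
Qed.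

Lemma PhiInv_Phi z : PhiInv (Phi z) = z.
Proof.
  set (w := PhiInv (Phi z)).
  assert (Hw : Phi w = Phi z) by (apply Phi_PhiInv, Phi_bounds).
  destruct (Rtotal_order w z) as [h|[h|h]]; auto;
    apply Phi_increasing in h; lra.
Qed.

Lemma PhiInv_increasing y1 y2 : 0 < y1 -> y1 < y2 -> y2 < 1 -> PhiInv y1 < PhiInv y2.
Proof.
  intros; apply Rnot_le_lt; intro Hle; apply Phi_le in Hle.
  rewrite !Phi_PhiInv in Hle by lra; lra.
Qed.

Lemma PhiInv_le y1 y2 : 0 < y1 -> y1 <= y2 -> y2 < 1 -> PhiInv y1 <= PhiInv y2.
Proof. intros h [H|H] h'; [left; apply PhiInv_increasing | right; subst]; auto. Qed.

Lemma PhiInv_continuity_pt y : 0 < y < 1 -> continuity_pt PhiInv y.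
Proof.
  intros Hy eps He; set (z := PhiInv y).
  assert (Hz : Phi z = y) by (apply Phi_PhiInv; auto).
  pose proof (Phi_increasing z (z + eps) ltac:(lra)).
  pose proof (Phi_increasing (z - eps) z ltac:(lra)).
  pose proof (Rmin_l (Phi (z + eps) - y) (y - Phi (z - eps))).
  pose proof (Rmin_r (Phi (z + eps) - y) (y - Phi (z - eps))).
  set (d := Rmin (Phi (z + eps) - y) (y - Phi (z - eps))) in *.
  exists d; split; [apply Rmin_glb_lt; lra|].
  intros y' [_ Hd]; simpl in *; unfold R_dist in *; fold z; apply Rabs_def2 in Hd.
  pose proof (Phi_bounds (z - eps)); pose proof (Phi_bounds (z + eps)).
  apply Rabs_def1; apply Rnot_le_lt; intro Hle.
  - assert (H' : z + eps <= PhiInv y') by lra.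
    apply Phi_le in H'; rewrite Phi_PhiInv in H' by lra; lra.
  - assert (H' : PhiInv y' <= z - eps) by lra.
    apply Phi_le in H'; rewrite Phi_PhiInv in H' by lra; lra.
Qed.

(* Inverse function theorem on the interval [y/2, (y+1)/2]. *)
Lemma PhiInv_derive y : 0 < y < 1 -> derivable_pt_lim PhiInv y (/ phi (PhiInv y)).
Proof.
  intros Hy.
  assert (Prf : forall a, PhiInv (y / 2) <= a <= PhiInv ((y + 1) / 2) -> derivable_pt Phi a)
    by (intros a _; exists (phi a); apply is_derive_Reals, Phi_derive).
  assert (Hi : PhiInv (y / 2) <= PhiInv y <= PhiInv ((y + 1) / 2))
    by (split; apply PhiInv_le; lra).
  assert (Hd : derive_pt Phi (PhiInv y) (Prf (PhiInv y) Hi) = phi (PhiInv y))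
    by (apply derive_pt_eq_0, is_derive_Reals, Phi_derive).
  replace (/ phi (PhiInv y)) with (1 / derive_pt Phi (PhiInv y) (Prf (PhiInv y) Hi))
    by (rewrite Hd; unfold Rdiv; ring).
  apply Ranalysis5.derivable_pt_lim_recip_interv; try lra.
  - apply PhiInv_continuity_pt; auto.
  - intros x0 Hx0; unfold comp, id; apply Phi_PhiInv; lra.
  - rewrite Hd; pose proof (phi_pos (PhiInv y)); lra.
Qed.

(** * The density q = Q' *)

Definition q_density (M x : R) : R := exp (- (M * M) / 2 - M * PhiInv x).

(* Chain rule: [Q'(x) = phi(M + Phi^{-1} x) / phi(Phi^{-1} x)]. *)
Lemma Qfun_derive M x : 0 < x < 1 -> derivable_pt_lim (Qfun M) x (q_density M x).
Proof.
  intros Hx.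
  replace (q_density M x) with (phi (M + PhiInv x) * / phi (PhiInv x)).
  - apply (derivable_pt_lim_comp (fun t => M + PhiInv t) Phi).
    + rewrite <- (Rplus_0_l (/ phi _)).
      apply derivable_pt_lim_plus; [apply derivable_pt_lim_const | apply PhiInv_derive; auto].
    + apply is_derive_Reals, Phi_derive.
  - unfold q_density, phi; set (z := PhiInv x).
    replace (- ((M + z) * (M + z)) / 2) with (- (M * M) / 2 - M * z + - (z * z) / 2) by field.
    rewrite exp_plus; pose proof sqrt_2PI_pos; pose proof (exp_pos (- (z * z) / 2)).
    field; lra.
Qed.

Lemma qBS_eq M x : 0 < x < 1 -> qBS M x = q_density M x.
Proof.
  intros Hx; apply (uniqueness_limite (Qfun M) x); [|apply Qfun_derive; auto].
  apply (epsilon_spec inhR (fun l => derivable_pt_lim (Qfun M) x l)).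
  exists (q_density M x); apply Qfun_derive; auto.
Qed.

Lemma q_density_pos M x : 0 < q_density M x.
Proof. apply exp_pos. Qed.

Lemma q_density_antitone M x y : 0 <= M -> 0 < x -> x <= y -> y < 1 ->
  q_density M y <= q_density M x.
Proof.
  intros HM Hx Hxy Hy; apply exp_le_compat.
  pose proof (PhiInv_le x y Hx Hxy Hy); apply Rplus_le_compat_l, Ropp_le_contravar.
  apply Rmult_le_compat_l; auto.
Qed.

Lemma q_density_continuous M x : 0 < x < 1 -> continuous (q_density M) x.
Proof.
  intros Hx; apply continuity_pt_filterlim; unfold q_density.
  apply (continuity_pt_comp (fun t => - (M * M) / 2 - M * PhiInv t) exp).
  - apply continuity_pt_minus; [apply continuity_pt_const; intros a b; auto|].
    apply continuity_pt_mult; [apply continuity_pt_const; intros a b; auto|].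
    apply PhiInv_continuity_pt; auto.
  - apply derivable_continuous_pt, derivable_pt_exp.
Qed.

Lemma Qfun_bounds M x : 0 < Qfun M x < 1.
Proof. apply Phi_bounds. Qed.

Lemma Qfun_le M a b : 0 < a -> a <= b -> b < 1 -> Qfun M a <= Qfun M b.
Proof. intros; apply Phi_le, Rplus_le_compat_l, PhiInv_le; auto. Qed.

Lemma is_RInt_q_density M a b : 0 < a -> a <= b -> b < 1 ->
  is_RInt (q_density M) a b (Qfun M b - Qfun M a).
Proof.
  intros; apply (is_RInt_derive (V:=R_CompleteNormedModule) (Qfun M) (q_density M));
    intros x Hx; rewrite Rmin_left, Rmax_right in Hx by lra.
  - apply is_derive_Reals, Qfun_derive; lra.
  - apply q_density_continuous; lra.
Qed.

Lemma ex_RInt_q_density M a b : 0 < a -> a <= b -> b < 1 -> ex_RInt (q_density M) a b.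
Proof. intros; eexists; apply is_RInt_q_density; auto. Qed.

Lemma RInt_q_density M a b : 0 < a -> a <= b -> b < 1 ->
  RInt (q_density M) a b = Qfun M b - Qfun M a.
Proof. intros; apply (is_RInt_unique (V:=R_CompleteNormedModule)), is_RInt_q_density; auto. Qed.

Lemma Qfun_near_0 M eps : 0 < eps ->
  exists d, 0 < d < 1 /\ forall a, 0 < a < d -> Qfun M a < eps.
Proof.
  intros He; destruct (Phi_near_0 eps He) as [K HK].
  exists (Phi (K - M)); split; [apply Phi_bounds|].
  intros a Ha; apply HK.
  assert (Hlt : PhiInv a < PhiInv (Phi (K - M)))
    by (apply PhiInv_increasing; try lra; apply Phi_bounds).
  rewrite PhiInv_Phi in Hlt; lra.
Qed.

Lemma Qfun_near_1 M eps : 0 < eps ->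
  exists d, 0 < d < 1 /\ forall b, 1 - d < b < 1 -> 1 - eps < Qfun M b.
Proof.
  intros He; destruct (Phi_near_1 eps He) as [K HK].
  pose proof (Phi_bounds (K - M)).
  exists (1 - Phi (K - M)); split; [lra|].
  intros b Hb; apply HK.
  assert (Hlt : PhiInv (Phi (K - M)) < PhiInv b) by (apply PhiInv_increasing; lra).
  rewrite PhiInv_Phi in Hlt; lra.
Qed.

(** * Improper integrals over (0,1) *)

Definition ex_RInt_in01 (h : R -> R) : Prop :=
  forall a b, 0 < a -> a <= b -> b < 1 -> ex_RInt h a b.

Lemma improper_int01_RInt h I : improper_int01 h I <->
  ex_RInt_in01 h /\
  forall eps, eps > 0 -> exists d, d > 0 /\
    forall a b, 0 < a < d -> 1 - d < b < 1 -> Rabs (RInt h a b - I) < eps.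
Proof.
  split.
  - intros [Hi Hl]; split.
    + intros a b ? ? ?; destruct (Hi a b) as [pr]; auto; apply ex_RInt_Reals_1; auto.
    + intros eps He; destruct (Hl eps He) as [d [Hd H]].
      pose proof (Rmin_l d (1 / 2)); pose proof (Rmin_r d (1 / 2)).
      exists (Rmin d (1 / 2)); split; [apply Rmin_glb_lt; lra|].
      intros a b Ha Hb; destruct (Hi a b) as [pr]; try lra.
      rewrite (RInt_Reals h a b pr); apply H; lra.
  - intros [Hex Hlim]; split.
    + intros; constructor; apply ex_RInt_Reals_0; auto.
    + intros eps He; destruct (Hlim eps He) as [d [Hd H]].
      exists d; split; auto; intros a b pr Ha Hb; rewrite <- RInt_Reals; auto.
Qed.

Lemma int01_eq h I : improper_int01 h I -> int01 h = I.
Proof.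
  intros HI.
  assert (HJ : improper_int01 h (int01 h)) by (apply (epsilon_spec inhR (improper_int01 h)); eauto).
  apply improper_int01_RInt in HI as [Hex H1]; apply improper_int01_RInt in HJ as [_ H2].
  destruct (Req_dec (int01 h) I) as [|Hne]; auto; exfalso.
  assert (Hd : 0 < Rabs (int01 h - I) / 2) by (apply Rdiv_lt_0_compat; [apply Rabs_pos_lt|]; lra).
  destruct (H1 _ Hd) as [d1 [Hd1 HA1]]; destruct (H2 _ Hd) as [d2 [Hd2 HA2]].
  set (a := Rmin (Rmin d1 d2) (1 / 2) / 2).
  pose proof (Rmin_l (Rmin d1 d2) (1 / 2)); pose proof (Rmin_r (Rmin d1 d2) (1 / 2)).
  pose proof (Rmin_l d1 d2); pose proof (Rmin_r d1 d2).
  assert (0 < Rmin (Rmin d1 d2) (1 / 2)) by (repeat apply Rmin_glb_lt; lra).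
  pose proof (HA1 a (1 - a) ltac:(unfold a; lra) ltac:(unfold a; lra)).
  pose proof (HA2 a (1 - a) ltac:(unfold a; lra) ltac:(unfold a; lra)).
  pose proof (Rabs_triang (RInt h a (1 - a) - I) (- (RInt h a (1 - a) - int01 h))).
  rewrite Rabs_Ropp in *.
  replace (RInt h a (1 - a) - I + - (RInt h a (1 - a) - int01 h)) with (int01 h - I) in * by ring.
  lra.
Qed.

Lemma improper_int01_ext f g I : (forall x, 0 < x < 1 -> f x = g x) ->
  improper_int01 f I -> improper_int01 g I.
Proof.
  intros Hfg Hf; apply improper_int01_RInt in Hf as [Hex Hl]; apply improper_int01_RInt.
  assert (E : forall a b, 0 < a -> a <= b -> b < 1 -> RInt f a b = RInt g a b).
  { intros a b ? ? ?; apply RInt_ext; intros x Hx.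
    rewrite Rmin_left, Rmax_right in Hx by lra; apply Hfg; lra. }
  split.
  - intros a b ? ? ?; apply (ex_RInt_ext (V:=R_NormedModule) f); auto.
    intros x Hx; rewrite Rmin_left, Rmax_right in Hx by lra; apply Hfg; lra.
  - intros eps He; destruct (Hl eps He) as [d [Hd H]].
    pose proof (Rmin_l d (1 / 2)); pose proof (Rmin_r d (1 / 2)).
    exists (Rmin d (1 / 2)); split; [apply Rmin_glb_lt; lra|].
    intros a b Ha Hb; rewrite <- E by lra; apply H; lra.
Qed.

Lemma improper_int01_plus f g I J : improper_int01 f I -> improper_int01 g J ->
  improper_int01 (fun x => f x + g x) (I + J).
Proof.
  intros Hf Hg.
  apply improper_int01_RInt in Hf as [Hex1 Hl1]; apply improper_int01_RInt in Hg as [Hex2 Hl2].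
  apply improper_int01_RInt; split.
  - intros a b ? ? ?; apply (ex_RInt_plus (V:=R_NormedModule)); auto.
  - intros eps He.
    destruct (Hl1 (eps / 2)) as [d1 [Hd1 H1]]; [lra|].
    destruct (Hl2 (eps / 2)) as [d2 [Hd2 H2]]; [lra|].
    pose proof (Rmin_l (Rmin d1 d2) (1 / 2)); pose proof (Rmin_r (Rmin d1 d2) (1 / 2)).
    pose proof (Rmin_l d1 d2); pose proof (Rmin_r d1 d2).
    exists (Rmin (Rmin d1 d2) (1 / 2)); split; [repeat apply Rmin_glb_lt; lra|].
    intros a b Ha Hb.
    rewrite (RInt_plus (V:=R_CompleteNormedModule) f g) by (apply Hex1 || apply Hex2; lra).
    pose proof (H1 a b ltac:(lra) ltac:(lra)); pose proof (H2 a b ltac:(lra) ltac:(lra)).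
    pose proof (Rabs_triang (RInt f a b - I) (RInt g a b - J)).
    change (plus (RInt f a b) (RInt g a b)) with (RInt f a b + RInt g a b).
    replace (RInt f a b + RInt g a b - (I + J)) with (RInt f a b - I + (RInt g a b - J)) by ring.
    lra.
Qed.

Lemma improper_int01_scal f c I : improper_int01 f I -> improper_int01 (fun x => c * f x) (c * I).
Proof.
  intros Hf; apply improper_int01_RInt in Hf as [Hex Hl]; apply improper_int01_RInt; split.
  - intros a b ? ? ?; apply (ex_RInt_scal (V:=R_NormedModule)); auto.
  - intros eps He; pose proof (Rabs_pos c) as Hc.
    destruct (Hl (eps / (Rabs c + 1))) as [d [Hd H]]; [apply Rdiv_lt_0_compat; lra|].
    pose proof (Rmin_l d (1 / 2)); pose proof (Rmin_r d (1 / 2)).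
    exists (Rmin d (1 / 2)); split; [apply Rmin_glb_lt; lra|].
    intros a b Ha Hb; rewrite RInt_scal_R by (apply Hex; lra).
    replace (c * RInt f a b - c * I) with (c * (RInt f a b - I)) by ring.
    rewrite Rabs_mult.
    pose proof (H a b ltac:(lra) ltac:(lra)); pose proof (Rabs_pos (RInt f a b - I)).
    assert (Rabs (RInt f a b - I) * (Rabs c + 1) < eps).
    { apply Rmult_lt_reg_r with (/ (Rabs c + 1)); [apply Rinv_0_lt_compat; lra|].
      rewrite Rmult_assoc, Rinv_r; lra. }
    nra.
Qed.

Lemma improper_int01_const c : improper_int01 (fun _ => c) c.
Proof.
  apply improper_int01_RInt; split; [intros a b ? ? ?; apply ex_RInt_const|].
  intros eps He; pose proof (Rabs_pos c) as Hc.
  set (d := Rmin (1 / 2) (eps / (2 * (Rabs c + 1)))).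
  assert (Hd : 0 < d) by (apply Rmin_glb_lt; [|apply Rdiv_lt_0_compat]; lra).
  assert (Hcd : Rabs c * (2 * d) < eps).
  { apply Rle_lt_trans with (Rabs c * (eps / (Rabs c + 1))).
    - apply Rmult_le_compat_l; auto; pose proof (Rmin_r (1 / 2) (eps / (2 * (Rabs c + 1)))) as Hr.
      fold d in Hr.
      replace (eps / (Rabs c + 1)) with (2 * (eps / (2 * (Rabs c + 1)))) by (field; lra).
      lra.
    - apply Rmult_lt_reg_r with (Rabs c + 1); [lra|].
      replace (Rabs c * (eps / (Rabs c + 1)) * (Rabs c + 1)) with (Rabs c * eps) by (field; lra).
      nra. }
  exists d; split; [lra|]; intros a b Ha Hb.
  rewrite RInt_const_R.
  replace ((b - a) * c - c) with (- (c * (1 - b + a))) by ring.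
  rewrite Rabs_Ropp, Rabs_mult, (Rabs_pos_eq (1 - b + a)) by lra.
  apply Rle_lt_trans with (Rabs c * (2 * d)); [apply Rmult_le_compat_l|]; lra.
Qed.

Lemma improper_int01_q_density M : improper_int01 (q_density M) 1.
Proof.
  apply improper_int01_RInt; split; [intros a b ? ? ?; apply ex_RInt_q_density; auto|].
  intros eps He.
  destruct (Qfun_near_0 M (eps / 2)) as [d1 [Hd1 H1]]; [lra|].
  destruct (Qfun_near_1 M (eps / 2)) as [d2 [Hd2 H2]]; [lra|].
  pose proof (Rmin_l (Rmin d1 d2) (1 / 2)); pose proof (Rmin_r (Rmin d1 d2) (1 / 2)).
  pose proof (Rmin_l d1 d2); pose proof (Rmin_r d1 d2).
  exists (Rmin (Rmin d1 d2) (1 / 2)); split; [repeat apply Rmin_glb_lt; lra|].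
  intros a b Ha Hb; rewrite RInt_q_density by lra.
  pose proof (H1 a ltac:(lra)); pose proof (H2 b ltac:(lra)).
  pose proof (Qfun_bounds M a); pose proof (Qfun_bounds M b).
  apply Rabs_def1; lra.
Qed.

(* [I] is the supremum of the partial integrals. *)
Lemma improper_int01_nonneg k B :
  ex_RInt_in01 k -> (forall x, 0 < x < 1 -> 0 <= k x) ->
  (forall a b, 0 < a -> a <= b -> b < 1 -> RInt k a b <= B) ->
  exists I, improper_int01 k I /\ 0 <= I /\
    forall B', (forall a b, 0 < a -> a <= b -> b < 1 -> RInt k a b <= B') -> I <= B'.
Proof.
  intros Hex Hpos HB.
  set (E := fun y => exists a b, 0 < a /\ a <= b /\ b < 1 /\ y = RInt k a b).
  assert (Ege : forall a b, 0 < a -> a <= b -> b < 1 -> 0 <= RInt k a b)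
    by (intros; apply RInt_ge_0; auto; intros; apply Hpos; lra).
  assert (E0 : E (RInt k (1 / 2) (1 / 2))) by (exists (1 / 2), (1 / 2); repeat split; lra).
  destruct (completeness E) as [I [HI1 HI2]].
  - exists B; intros y [a [b [? [? [? ->]]]]]; auto.
  - eauto.
  assert (I0 : 0 <= I)
    by (apply Rle_trans with (RInt k (1 / 2) (1 / 2)); [apply Ege | apply HI1]; auto; lra).
  exists I; split; [|split; auto].
  - apply improper_int01_RInt; split; auto.
    intros eps He.
    assert (Hy : exists a0 b0, 0 < a0 /\ a0 <= b0 /\ b0 < 1 /\ I - eps < RInt k a0 b0).
    { apply NNPP; intro Hn.
      assert (I <= I - eps); [|lra].
      apply HI2; intros y [a [b [? [? [? ->]]]]].
      apply Rnot_lt_le; intro; apply Hn; exists a, b; repeat split; auto. }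
    destruct Hy as [a0 [b0 [h1 [h2 [h3 h4]]]]].
    pose proof (Rmin_l (Rmin a0 (1 - b0)) (1 / 2)); pose proof (Rmin_r (Rmin a0 (1 - b0)) (1 / 2)).
    pose proof (Rmin_l a0 (1 - b0)); pose proof (Rmin_r a0 (1 - b0)).
    exists (Rmin (Rmin a0 (1 - b0)) (1 / 2)); split; [repeat apply Rmin_glb_lt; lra|].
    intros a b Ha Hb.
    assert (Hab : RInt k a b = RInt k a a0 + RInt k a0 b0 + RInt k b0 b).
    { rewrite Rplus_assoc, (RInt_Chasles_R k a0 b0 b), (RInt_Chasles_R k a a0 b);
        auto; apply Hex; lra. }
    assert (RInt k a b <= I) by (apply HI1; exists a, b; repeat split; lra).
    pose proof (Ege a a0 ltac:(lra) ltac:(lra) ltac:(lra)).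
    pose proof (Ege b0 b ltac:(lra) ltac:(lra) ltac:(lra)).
    apply Rabs_def1; lra.
  - intros B' HB'; apply HI2; intros y [a [b [? [? [? ->]]]]]; auto.
Qed.

(** * Limits at +oo *)

Definition to_pinfty_at_pinfty (F : R -> R) : Prop :=
  forall m, exists K, forall eta, eta > K -> F eta > m.

Lemma lim_pinfty_plus F G l m : lim_pinfty F l -> lim_pinfty G m ->
  lim_pinfty (fun eta => F eta + G eta) (l + m).
Proof.
  intros HF HG eps He.
  destruct (HF (eps / 2)) as [K1 H1]; [lra|]; destruct (HG (eps / 2)) as [K2 H2]; [lra|].
  exists (Rmax K1 K2); intros eta Heta.
  pose proof (Rmax_l K1 K2); pose proof (Rmax_r K1 K2).
  pose proof (H1 eta ltac:(lra)); pose proof (H2 eta ltac:(lra)).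
  pose proof (Rabs_triang (F eta - l) (G eta - m)).
  replace (F eta + G eta - (l + m)) with (F eta - l + (G eta - m)) by ring; lra.
Qed.

Lemma lim_pinfty_scal c F l : lim_pinfty F l -> lim_pinfty (fun eta => c * F eta) (c * l).
Proof.
  intros HF eps He; pose proof (Rabs_pos c) as Hc.
  destruct (HF (eps / (Rabs c + 1))) as [K HK]; [apply Rdiv_lt_0_compat; lra|].
  exists K; intros eta Heta.
  replace (c * F eta - c * l) with (c * (F eta - l)) by ring; rewrite Rabs_mult.
  pose proof (HK eta Heta); pose proof (Rabs_pos (F eta - l)).
  assert (Rabs (F eta - l) * (Rabs c + 1) < eps).
  { apply Rmult_lt_reg_r with (/ (Rabs c + 1)); [apply Rinv_0_lt_compat; lra|].
    rewrite Rmult_assoc, Rinv_r; lra. }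
  nra.
Qed.

Lemma lim_pinfty_comp F G l : lim_pinfty F l -> to_pinfty_at_pinfty G ->
  lim_pinfty (fun eta => F (G eta)) l.
Proof.
  intros HF HG eps He; destruct (HF eps He) as [P HP]; destruct (HG P) as [K HK].
  exists K; intros eta Heta; apply HP, HK; auto.
Qed.

Lemma to_minfty_comp F G : to_minfty_at_pinfty F -> to_pinfty_at_pinfty G ->
  to_minfty_at_pinfty (fun eta => F (G eta)).
Proof.
  intros HF HG m; destruct (HF m) as [P HP]; destruct (HG P) as [K HK].
  exists K; intros eta Heta; apply HP, HK; auto.
Qed.

Lemma to_minfty_plus_bounded F G B : to_minfty_at_pinfty F ->
  (exists K, forall eta, eta > K -> G eta <= B) ->
  to_minfty_at_pinfty (fun eta => F eta + G eta).
Proof.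
  intros HF [K2 HG] m; destruct (HF (m - B)) as [K1 H1].
  exists (Rmax K1 K2); intros eta Heta.
  pose proof (Rmax_l K1 K2); pose proof (Rmax_r K1 K2).
  pose proof (H1 eta ltac:(lra)); pose proof (HG eta ltac:(lra)); lra.
Qed.

(** * Infima and the generalised inverse *)

Lemma is_glb_unique E m1 m2 : is_glb E m1 -> is_glb E m2 -> m1 = m2.
Proof. intros [h1 h2] [h3 h4]; apply Rle_antisym; auto. Qed.

Lemma is_glb_approx E m y : is_glb E m -> m < y -> exists x, E x /\ x < y.
Proof.
  intros [_ Hm] Hy; apply NNPP; intro Hn.
  assert (y <= m); [|lra].
  apply Hm; intros x Ex; apply Rnot_lt_le; intro; apply Hn; eauto.
Qed.

Lemma glb_exists E b x0 : is_lower_bound E b -> E x0 -> exists m, is_glb E m.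
Proof.
  intros Hb Hx.
  destruct (completeness (fun x => E (- x))) as [m [Hm1 Hm2]].
  - exists (- b); intros x Hx'; apply Hb in Hx'; lra.
  - exists (- x0); rewrite Ropp_involutive; auto.
  - exists (- m); split.
    + intros x Ex; assert (- x <= m) by (apply Hm1; rewrite Ropp_involutive; auto); lra.
    + intros c Hc; assert (m <= - c); [|lra].
      apply Hm2; intros x Ex; apply Hc in Ex; lra.
Qed.

Lemma dagger_eq g p m : is_glb (fun x => superdiff g x p) m -> dagger g p = m.
Proof.
  intros H; apply (is_glb_unique (fun x => superdiff g x p)); auto.
  apply (epsilon_spec inhR (is_glb (fun x => superdiff g x p))); eauto.
Qed.

Lemma superdiff_antitone g p p' w z : p < p' -> superdiff g w p' -> superdiff g z p -> w <= z.
Proof. intros Hp [Dw Hw] [Dz Hz]; specialize (Hw z Dz); specialize (Hz w Dw); nra. Qed.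

Lemma dagger_antitone g p p' m m' : p < p' ->
  is_glb (fun x => superdiff g x p) m -> is_glb (fun x => superdiff g x p') m' ->
  dagger g p' <= dagger g p.
Proof.
  intros Hp Hm Hm'; rewrite (dagger_eq _ _ _ Hm), (dagger_eq _ _ _ Hm').
  destruct (is_glb_approx _ _ (m' + 1) Hm') as [w [Hw _]]; [lra|].
  apply Rle_trans with w; [apply Hm'; auto|].
  apply Hm; intros z Hz; eapply superdiff_antitone; eauto.
Qed.

Section IncreasingUtility.

Variable u : efun.
Hypothesis u_increasing : eincreasing u.
Hypothesis u_dagger_glb : forall p, p > 0 -> exists g, is_glb (fun x => superdiff u x p) g.

Lemma glb_dom_le_dagger gmin p : p > 0 -> is_glb (edom u) gmin -> gmin <= dagger u p.
Proof.
  intros Hp [Hm _]; destruct (u_dagger_glb p Hp) as [g Hg].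
  rewrite (dagger_eq _ _ _ Hg); apply Hg; intros x [Dx _]; auto.
Qed.

(* A supergradient point [z >= T] for a large slope [p] lies below one [z1] for the
   slope [1]; hence [p (T - x0) <= u z - u x0 <= u z1 - u x0], which bounds [p]. *)
Lemma dagger_eventually_lt T x0 : edom u x0 -> x0 < T ->
  exists P, P > 0 /\ forall p, p >= P -> dagger u p < T.
Proof.
  intros Dx0 HT.
  destruct (u_dagger_glb 1 ltac:(lra)) as [g1 Hg1].
  destruct (is_glb_approx _ _ (g1 + 1) Hg1) as [z1 [Sz1 _]]; [lra|].
  set (P := Rmax 2 ((eval u z1 - eval u x0) / (T - x0) + 1)).
  pose proof (Rmax_l 2 ((eval u z1 - eval u x0) / (T - x0) + 1)) as HP2.
  pose proof (Rmax_r 2 ((eval u z1 - eval u x0) / (T - x0) + 1)) as HPq.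
  fold P in HP2, HPq.
  exists P; split; [lra|]; intros p Hp.
  destruct (u_dagger_glb p ltac:(lra)) as [g Hg]; rewrite (dagger_eq _ _ _ Hg).
  destruct (is_glb_approx _ _ (g + 1) Hg) as [z [Sz _]]; [lra|].
  destruct (Rlt_dec z T) as [h|h]; [apply Rle_lt_trans with z; [apply Hg|]; auto|].
  exfalso.
  assert (Hzz1 : z <= z1) by (apply (superdiff_antitone u 1 p); auto; lra).
  destruct Sz as [Dz Hz]; destruct Sz1 as [Dz1 _].
  destruct (u_increasing z z1 Hzz1 Dz) as [_ Hu].
  specialize (Hz x0 Dx0).
  assert ((eval u z1 - eval u x0) / (T - x0) * (T - x0) = eval u z1 - eval u x0) by (field; lra).
  nra.
Qed.

Lemma dagger_cvg_glb_dom gmin : is_glb (edom u) gmin -> lim_pinfty (dagger u) gmin.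
Proof.
  intros Hgmin eps Heps.
  destruct (is_glb_approx _ _ (gmin + eps) Hgmin) as [x0 [Dx0 Hx0]]; [lra|].
  destruct (dagger_eventually_lt (gmin + eps) x0 Dx0 Hx0) as [P [HP HPu]].
  exists P; intros p Hp.
  pose proof (glb_dom_le_dagger gmin p ltac:(lra) Hgmin); pose proof (HPu p ltac:(lra)).
  apply Rabs_def1; lra.
Qed.

Lemma dagger_to_minfty : (forall m, exists x, edom u x /\ x < m) -> to_minfty_at_pinfty (dagger u).
Proof.
  intros Hunb m; destruct (Hunb m) as [x0 [Dx0 Hx0]].
  destruct (dagger_eventually_lt m x0 Dx0 Hx0) as [P [_ HPu]].
  exists P; intros p Hp; apply HPu; lra.
Qed.

End IncreasingUtility.

(** * The piecewise linear function v *)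

Lemma first_argmax (F : nat -> R) n : (1 <= n)%nat ->
  exists k, (1 <= k <= n)%nat /\ (forall i, (1 <= i <= n)%nat -> F i <= F k) /\
    (forall i, (1 <= i)%nat -> (i < k)%nat -> F i < F k).
Proof.
  induction n as [|n IH]; intros Hn; [lia|].
  destruct (Nat.eq_dec n 0) as [->|Hn0].
  - exists 1%nat; split; [lia|]; split; [intros i Hi; replace i with 1%nat by lia; lra | lia].
  - destruct (IH ltac:(lia)) as [k [Hk [Hmax Hfirst]]].
    destruct (Rlt_dec (F k) (F (S n))) as [Hlt|Hge].
    + exists (S n); split; [lia|]; split.
      * intros i Hi; destruct (Nat.eq_dec i (S n)) as [->|]; [lra|].
        specialize (Hmax i ltac:(lia)); lra.
      * intros i Hi Hin; specialize (Hmax i ltac:(lia)); lra.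
    + exists k; split; [lia|]; split; auto.
      intros i Hi; destruct (Nat.eq_dec i (S n)) as [->|]; [lra|]; apply Hmax; lia.
Qed.

Section PiecewiseLinear.

Variables (N : nat) (xs : nat -> R) (vf : R -> R).
Hypothesis N_pos : (1 <= N)%nat.
Hypothesis grid_increasing : forall i, (1 <= i)%nat -> (i < N)%nat -> xs i < xs (S i).
Hypothesis vf_affine : forall i, (1 <= i)%nat -> (i < N)%nat -> forall x, xs i <= x <= xs (S i) ->
  vf x = vf (xs i) + (vf (xs (S i)) - vf (xs i)) / (xs (S i) - xs i) * (x - xs i).
Hypothesis vf_const : forall x, xs N <= x -> vf x = vf (xs N).

Let v := mkEfun (fun x => xs 1%nat <= x) vf.

Lemma grid_le i j : (1 <= i)%nat -> (i <= j)%nat -> (j <= N)%nat -> xs i <= xs j.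
Proof.
  intros Hi Hij; induction j as [|j IH]; intros Hj; [lia|].
  destruct (Nat.eq_dec i (S j)) as [->|]; [lra|].
  pose proof (grid_increasing j ltac:(lia) ltac:(lia)); specialize (IH ltac:(lia) ltac:(lia)); lra.
Qed.

Lemma grid_segment k y : (1 <= k <= N)%nat -> xs 1%nat <= y < xs k ->
  exists i, (1 <= i)%nat /\ (i < k)%nat /\ xs i <= y < xs (S i).
Proof.
  induction k as [|k IH]; intros Hk Hy; [lia|].
  destruct (Nat.eq_dec k 0) as [->|]; [lra|].
  destruct (Rlt_le_dec y (xs k)) as [Hlt|Hge].
  - destruct (IH ltac:(lia) ltac:(lra)) as [i [? [? ?]]].
    exists i; repeat split; auto; try lia; lra.
  - exists k; repeat split; try lia; lra.
Qed.

Lemma segment_convex_comb p i y : (1 <= i)%nat -> (i < N)%nat -> xs i <= y < xs (S i) ->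
  exists t, 0 <= t < 1 /\
    vf y - p * y = (1 - t) * (vf (xs i) - p * xs i) + t * (vf (xs (S i)) - p * xs (S i)).
Proof.
  intros Hi HiN Hy; pose proof (grid_increasing i Hi HiN) as Hd.
  exists ((y - xs i) / (xs (S i) - xs i)); split.
  - split; [apply Rle_mult_inv_pos; lra|].
    apply Rmult_lt_reg_r with (xs (S i) - xs i); [lra|].
    unfold Rdiv; rewrite Rmult_assoc, Rinv_l; lra.
  - rewrite (vf_affine i Hi HiN y), (vf_affine i Hi HiN (xs (S i))) by lra.
    field; lra.
Qed.

Lemma superdiff_v_iff x p : superdiff v x p <->
  xs 1%nat <= x /\ forall y, xs 1%nat <= y -> vf y - p * y <= vf x - p * x.
Proof.
  unfold superdiff; simpl; split; intros [h1 h2]; split; auto;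
    intros y hy; specialize (h2 y hy); lra.
Qed.

(* [v^dagger(p)] is the first grid point maximising [vf x - p x]. *)
Lemma dagger_v_grid p : 0 < p -> exists k, (1 <= k <= N)%nat /\
  superdiff v (xs k) p /\ is_glb (fun x => superdiff v x p) (xs k).
Proof.
  intros Hp; set (h := fun y => vf y - p * y).
  destruct (first_argmax (fun i => h (xs i)) N N_pos) as [k [Hk [Hmax Hfirst]]].
  assert (Sk : superdiff v (xs k) p).
  { apply superdiff_v_iff; split; [apply grid_le; lia|].
    intros y Hy; change (h y <= h (xs k)).
    destruct (Rlt_le_dec y (xs N)) as [HyN|HyN].
    - destruct (grid_segment N y ltac:(lia) ltac:(lra)) as [i [Hi [HiN Hyi]]].
      destruct (segment_convex_comb p i y Hi HiN Hyi) as [t [Ht Heq]].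
      unfold h; rewrite Heq.
      pose proof (Hmax i ltac:(lia)); pose proof (Hmax (S i) ltac:(lia)); unfold h in *; nra.
    - apply Rle_trans with (h (xs N)); [|apply Hmax; lia].
      unfold h; rewrite (vf_const y HyN); nra. }
  exists k; split; [|split]; auto; split.
  - intros z Sz; apply superdiff_v_iff in Sz as [Hz1 Hz].
    apply Rnot_lt_le; intro Hzk.
    destruct (grid_segment k z ltac:(lia) ltac:(lra)) as [i [Hi [Hik Hzi]]].
    destruct (segment_convex_comb p i z Hi ltac:(lia) Hzi) as [t [Ht Heq]].
    pose proof (Hfirst i Hi Hik); pose proof (Hmax (S i) ltac:(lia)).
    pose proof (Hz (xs k) ltac:(apply grid_le; lia)); unfold h in *; nra.
  - intros b Hb; apply Hb, Sk.
Qed.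

Lemma dagger_v_at_grid p : 0 < p -> exists k, (1 <= k <= N)%nat /\ dagger v p = xs k.
Proof.
  intros Hp; destruct (dagger_v_grid p Hp) as [k [Hk [_ Hg]]].
  exists k; split; auto; apply dagger_eq; auto.
Qed.

Lemma dagger_v_bounds p : 0 < p -> xs 1%nat <= dagger v p <= xs N.
Proof.
  intros Hp; destruct (dagger_v_at_grid p Hp) as [k [Hk ->]]; split; apply grid_le; lia.
Qed.

Lemma dagger_v_in_grid p : 0 < p -> In (dagger v p) (map xs (seq 1 N)).
Proof.
  intros Hp; destruct (dagger_v_at_grid p Hp) as [k [Hk ->]].
  apply in_map, in_seq; lia.
Qed.

Lemma dagger_v_antitone p p' : 0 < p -> p <= p' -> dagger v p' <= dagger v p.
Proof.
  intros Hp [Hpp|<-]; [|lra].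
  destruct (dagger_v_grid p Hp) as [k [_ [_ Hg]]].
  destruct (dagger_v_grid p' ltac:(lra)) as [k' [_ [_ Hg']]].
  eapply dagger_antitone; eauto.
Qed.

(* For [p (x_2 - x_1) > - v(x_1)] the first grid point beats all others, as [v <= 0]. *)
Lemma dagger_v_large : (forall x, xs 1%nat <= x -> vf x <= 0) ->
  exists P, 0 < P /\ forall p, P <= p -> dagger v p = xs 1%nat.
Proof.
  intros Hneg.
  set (P := Rmax 1 (- vf (xs 1%nat) / (xs 2%nat - xs 1%nat) + 1)).
  pose proof (Rmax_l 1 (- vf (xs 1%nat) / (xs 2%nat - xs 1%nat) + 1)) as HP1.
  pose proof (Rmax_r 1 (- vf (xs 1%nat) / (xs 2%nat - xs 1%nat) + 1)) as HP2.
  fold P in HP1, HP2.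
  exists P; split; [lra|]; intros p Hp.
  destruct (dagger_v_grid p ltac:(lra)) as [k [Hk [Sk Hg]]].
  rewrite (dagger_eq _ _ _ Hg).
  destruct (Nat.eq_dec k 1) as [->|Hk1]; auto; exfalso.
  apply superdiff_v_iff in Sk as [Hk1' Sk].
  pose proof (grid_increasing 1 ltac:(lia) ltac:(lia)) as H12.
  pose proof (grid_le 2 k ltac:(lia) ltac:(lia) ltac:(lia)) as H2k.
  pose proof (Sk (xs 1%nat) ltac:(lra)); pose proof (Hneg (xs k) Hk1').
  assert (Hq : - vf (xs 1%nat) / (xs 2%nat - xs 1%nat) * (xs 2%nat - xs 1%nat) = - vf (xs 1%nat))
    by (field; lra).
  nra.
Qed.

End PiecewiseLinear.

(** * Integrals against monotone step functions *)

Lemma monotone_level_interval (g : R -> R) a b s x0 :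
  (forall x y, a < x -> x <= y -> y < b -> g x <= g y) -> a < x0 < b -> g x0 = s ->
  exists c1 c2, a <= c1 <= c2 /\ c2 <= b /\
    (forall x, a < x < b -> g x = s -> c1 <= x <= c2) /\
    (forall x, c1 < x < c2 -> g x = s).
Proof.
  intros Hg Hx0 Hgx0; set (A := fun x => a < x < b /\ g x = s).
  destruct (glb_exists A a x0) as [c1 Hc1]; [intros x [Hx _]; lra | split; auto|].
  destruct (completeness A) as [c2 [Hc2u Hc2l]];
    [exists b; intros x [Hx _]; lra | exists x0; split; auto|].
  assert (Hc1a : a <= c1) by (apply Hc1; intros x [Hx _]; lra).
  assert (Hc1x : c1 <= x0) by (apply Hc1; split; auto).
  assert (Hc2x : x0 <= c2) by (apply Hc2u; split; auto).
  assert (Hc2b : c2 <= b) by (apply Hc2l; intros x [Hx _]; lra).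
  exists c1, c2; split; [lra|]; split; [lra|]; split.
  - intros x Hx Hgx; split; [apply Hc1 | apply Hc2u]; split; auto.
  - intros x Hx.
    destruct (is_glb_approx A c1 x Hc1 ltac:(lra)) as [t1 [[Ht1 Gt1] Ht1x]].
    assert (E2 : exists t2, A t2 /\ x < t2).
    { apply NNPP; intro Hn; assert (c2 <= x); [|lra].
      apply Hc2l; intros t At; apply Rnot_lt_le; intro; apply Hn; eauto. }
    destruct E2 as [t2 [[Ht2 Gt2] Ht2x]].
    pose proof (Hg t1 x ltac:(lra) ltac:(lra) ltac:(lra)).
    pose proof (Hg x t2 ltac:(lra) ltac:(lra) ltac:(lra)); lra.
Qed.

(* Induction on the list of values: on the interval where [g] takes the value [s] the
   integrand is continuous, and on either side [g] avoids [s]. *)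
Lemma ex_RInt_monotone_finite (S : list R) : forall (h F g : R -> R) a b, a <= b ->
  (forall x, a <= x <= b -> continuous h x) ->
  (forall x y, a < x -> x <= y -> y < b -> g x <= g y) ->
  (forall x, a < x < b -> In (g x) S) ->
  ex_RInt (fun x => h x * F (g x)) a b.
Proof.
  induction S as [|s S IH]; intros h F g a b Hab Hh Hg HS.
  - destruct (Req_dec a b) as [->|E]; [apply (ex_RInt_point (V:=R_NormedModule))|].
    destruct (HS ((a + b) / 2)); lra.
  - destruct (classic (exists x, a < x < b /\ g x = s)) as [[x0 [Hx0 Hgx0]]|Hne].
    2:{ apply IH; auto; intros x Hx; destruct (HS x Hx); auto.
        exfalso; apply Hne; exists x; split; auto. }
    destruct (monotone_level_interval g a b s x0 Hg Hx0 Hgx0)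
      as [c1 [c2 [Hc1 [Hc2 [Hout Mid]]]]].
    assert (Other : forall x, a < x < b -> ~ c1 <= x <= c2 -> In (g x) S).
    { intros x Hx Hn; destruct (HS x Hx) as [E|E]; auto.
      exfalso; apply Hn, Hout; auto. }
    apply (ex_RInt_Chasles (V:=R_NormedModule)) with c1.
    { apply IH; try lra; intros; [apply Hh | apply Hg | apply Other]; lra. }
    apply (ex_RInt_Chasles (V:=R_NormedModule)) with c2.
    + apply (ex_RInt_ext (V:=R_NormedModule) (fun x => h x * F s)).
      * intros x Hx; rewrite Rmin_left, Rmax_right in Hx by lra; rewrite Mid; auto.
      * apply (ex_RInt_continuous (V:=R_CompleteNormedModule)); intros z Hz.
        rewrite Rmin_left, Rmax_right in Hz by lra.
        apply (continuous_mult (K:=R_AbsRing)); [apply Hh; lra | apply continuous_const].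
    + apply IH; try lra; intros; [apply Hh | apply Hg | apply Other]; lra.
Qed.

Definition step01 (L : list R) (g : R -> R) : Prop :=
  (forall x, 0 < x < 1 -> In (g x) L) /\
  (forall x y, 0 < x -> x <= y -> y < 1 -> g x <= g y).

Lemma ex_RInt_step01 L g h F : step01 L g -> (forall x, 0 < x < 1 -> continuous h x) ->
  ex_RInt_in01 (fun x => h x * F (g x)).
Proof.
  intros [HL Hg] Hh a b Ha Hab Hb.
  apply (ex_RInt_monotone_finite L); auto; intros; [apply Hh | apply Hg | apply HL]; lra.
Qed.

Lemma int01_one_plus_step_bounds L g vf x1 xN : step01 L g ->
  (forall x, 0 < x < 1 -> x1 <= g x <= xN) ->
  (forall y, x1 <= y -> vf x1 <= vf y <= 0) ->
  1 + vf x1 <= int01 (fun x => 1 + vf (g x)) <= 1.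
Proof.
  intros Hstep Hr Hvf.
  set (k := fun x => vf (g x) - vf x1).
  assert (Hk : forall x, 0 < x < 1 -> 0 <= k x <= - vf x1)
    by (intros x Hx; unfold k; pose proof (Hvf (g x) ltac:(pose proof (Hr x Hx); lra));
        pose proof (Hvf x1 ltac:(lra)); lra).
  assert (Hex : ex_RInt_in01 k).
  { intros a b ? ? ?.
    apply (ex_RInt_ext (V:=R_NormedModule) (fun x => 1 * (fun y => vf y - vf x1) (g x)));
      [intros; unfold k; simpl; ring|].
    apply (ex_RInt_step01 L g (fun _ => 1) (fun y => vf y - vf x1)); auto.
    intros; apply continuous_const. }
  assert (HB : forall a b, 0 < a -> a <= b -> b < 1 -> RInt k a b <= - vf x1).
  { intros a b Ha Hab Hb; apply Rle_trans with (RInt (fun _ => - vf x1) a b).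
    - apply RInt_le; auto; [apply ex_RInt_const|]; intros x Hx; apply Hk; lra.
    - rewrite RInt_const_R; pose proof (Hvf x1 ltac:(lra)); nra. }
  destruct (improper_int01_nonneg k (- vf x1) Hex) as [J [HJ [J0 JB]]];
    [intros; apply Hk; auto | auto |].
  pose proof (JB _ HB).
  rewrite (int01_eq _ (1 + vf x1 + J)); [lra|].
  apply improper_int01_ext with (fun x => 1 + vf x1 + k x); [intros; unfold k; ring|].
  apply improper_int01_plus; auto; apply improper_int01_const.
Qed.

Lemma RInt_le_tail_mass k M w b0 : ex_RInt_in01 k -> 0 <= w -> 0 < b0 < 1 ->
  (forall a b, 0 < a -> a <= b -> b < 1 -> RInt k a b <= w * (Qfun M b - Qfun M a)) ->
  (forall a b, 0 < a -> a <= b -> b <= b0 -> RInt k a b = 0) ->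
  forall a b, 0 < a -> a <= b -> b < 1 -> RInt k a b <= w * (1 - Qfun M b0).
Proof.
  intros Hex Hw Hb0 Hkq Z a b Ha Hab Hb.
  pose proof (Qfun_bounds M b0); pose proof (Qfun_bounds M b).
  destruct (Rle_dec b b0); [rewrite Z by lra; nra|].
  destruct (Rle_dec b0 a).
  - pose proof (Hkq a b Ha Hab Hb); pose proof (Qfun_le M b0 a ltac:(lra) ltac:(lra) ltac:(lra)).
    nra.
  - rewrite <- (RInt_Chasles_R k a b0 b), Z by (try apply Hex; lra).
    pose proof (Hkq b0 b ltac:(lra) ltac:(lra) Hb); nra.
Qed.

Lemma int01_weighted_step L g M e x1 xN : 0 < e -> step01 L g ->
  (forall x, 0 < x < 1 -> x1 <= g x <= xN) ->
  exists J, int01 (fun x => e * qBS M x * g x) = e * x1 + J /\ 0 <= J <= e * (xN - x1) /\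
    forall b0, 0 < b0 < 1 -> (forall x, 0 < x <= b0 -> g x = x1) ->
      J <= e * (xN - x1) * (1 - Qfun M b0).
Proof.
  intros He Hstep Hr.
  assert (HxN : x1 <= xN) by (pose proof (Hr (1 / 2) ltac:(lra)); lra).
  set (k := fun x => e * q_density M x * (g x - x1)).
  assert (Hex : ex_RInt_in01 k)
    by (apply (ex_RInt_step01 L g (fun x => e * q_density M x) (fun y => y - x1)); auto;
        intros; apply (continuous_mult (K:=R_AbsRing));
        [apply continuous_const | apply q_density_continuous; auto]).
  assert (Hkq : forall a b, 0 < a -> a <= b -> b < 1 ->
            RInt k a b <= e * (xN - x1) * (Qfun M b - Qfun M a)).
  { intros a b Ha Hab Hb.
    rewrite <- RInt_q_density, <- RInt_scal_R by (auto; apply ex_RInt_q_density; auto).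
    apply RInt_le; auto; [apply (ex_RInt_scal (V:=R_NormedModule)), ex_RInt_q_density; auto|].
    intros x Hx; unfold k; pose proof (Hr x ltac:(lra)); pose proof (q_density_pos M x).
    assert (0 <= e * q_density M x) by nra; nra. }
  assert (HB : forall a b, 0 < a -> a <= b -> b < 1 -> RInt k a b <= e * (xN - x1)).
  { intros a b Ha Hab Hb; pose proof (Hkq a b Ha Hab Hb).
    pose proof (Qfun_bounds M a); pose proof (Qfun_bounds M b).
    pose proof (Qfun_le M a b Ha Hab Hb).
    assert (0 <= e * (xN - x1)) by nra; nra. }
  destruct (improper_int01_nonneg k (e * (xN - x1)) Hex) as [J [HJ [J0 JB]]]; auto.
  { intros x Hx; unfold k; pose proof (Hr x Hx); pose proof (q_density_pos M x).
    apply Rmult_le_pos; nra. }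
  exists J; split; [|split; [split; auto|]].
  - apply int01_eq, improper_int01_ext with (fun x => e * x1 * q_density M x + k x).
    + intros x Hx; unfold k; rewrite qBS_eq by auto; ring.
    + replace (e * x1 + J) with (e * x1 * 1 + J) by ring.
      apply improper_int01_plus; auto; apply improper_int01_scal, improper_int01_q_density.
  - intros b0 Hb0 Htail; apply JB; apply (RInt_le_tail_mass k M); auto; [nra|].
    intros a b ? ? ?; rewrite (RInt_ext _ (fun _ => 0)); [rewrite RInt_const_R; lra|].
    intros x Hx; rewrite Rmin_left, Rmax_right in Hx by lra; unfold k.
    simpl; rewrite Htail by lra; ring.
Qed.

(** * The limit of X^eta *)

Definition gamma_slope (v : efun) (mu r sigma dt s : R) (C : nat) (eta : R) : R :=
  - (eta / dt) * / (-1 + s * int01 (fun x => 1 + eval v (fEta v mu r sigma dt s C eta x))).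

Definition discounted_mean (v : efun) (mu r sigma dt s : R) (C : nat) (eta : R) : R :=
  int01 (fun x => exp (- r * dt) * qBS (Mpar mu r sigma dt) x * fEta v mu r sigma dt s C eta x).

Lemma XEta_split u v mu r sigma dt s C : XEta u v mu r sigma dt s C =
  fun eta => dagger u (gamma_slope v mu r sigma dt s C eta)
             + s ^ C * discounted_mean v mu r sigma dt s C eta.
Proof. reflexivity. Qed.

Section LargeMultiplier.

Variables (mu r sigma dt s : R) (C N : nat) (xs : nat -> R) (vf : R -> R).
Hypothesis sigma_pos : sigma > 0.
Hypothesis dt_pos : dt > 0.
Hypothesis s_bounds : 0 < s < 1.
Hypothesis N_pos : (1 <= N)%nat.
Hypothesis grid_increasing : forall i, (1 <= i)%nat -> (i < N)%nat -> xs i < xs (S i).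
Hypothesis vf_affine : forall i, (1 <= i)%nat -> (i < N)%nat -> forall x, xs i <= x <= xs (S i) ->
  vf x = vf (xs i) + (vf (xs (S i)) - vf (xs i)) / (xs (S i) - xs i) * (x - xs i).
Hypothesis vf_const : forall x, xs N <= x -> vf x = vf (xs N).
Hypothesis vf_range : forall x, xs 1%nat <= x -> vf (xs 1%nat) <= vf x <= 0.

Let v := mkEfun (fun x => xs 1%nat <= x) vf.
Let M := Mpar mu r sigma dt.
Let e := exp (- r * dt).
Let c := powerRZ s (Z.of_nat C - 1) * e.
Let f (eta : R) : R -> R := fEta v mu r sigma dt s C eta.

Lemma M_nonneg : 0 <= M.
Proof. apply Rle_mult_inv_pos; [apply Rmult_le_pos; [apply Rabs_pos | apply sqrt_pos] | lra]. Qed.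

Lemma c_pos : 0 < c.
Proof. apply Rmult_lt_0_compat; [apply powerRZ_lt; lra | apply exp_pos]. Qed.

Lemma fEta_eq eta x : 0 < x < 1 -> f eta x = dagger v (eta * c * q_density M x).
Proof.
  intros Hx; unfold f, fEta, c, e, M; rewrite qBS_eq by auto.
  f_equal; ring.
Qed.

Lemma fEta_step eta : 0 < eta ->
  step01 (map xs (seq 1 N)) (f eta) /\ forall x, 0 < x < 1 -> xs 1%nat <= f eta x <= xs N.
Proof.
  intros Heta; pose proof c_pos.
  assert (Harg : forall x, 0 < eta * c * q_density M x)
    by (intros; apply Rmult_lt_0_compat; [nra | apply q_density_pos]).
  pose proof M_nonneg as HM.
  split; [split|].
  - intros x Hx; rewrite fEta_eq by auto; eapply dagger_v_in_grid; eauto.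
  - intros x y Hx Hxy Hy; rewrite !fEta_eq by lra.
    eapply dagger_v_antitone; eauto.
    apply Rmult_le_compat_l; [nra | apply q_density_antitone; auto].
  - intros x Hx; rewrite fEta_eq by auto; eapply dagger_v_bounds; eauto.
Qed.

(* As [q] is nonincreasing, [eta c q(x) >= eta c q(b0)] on (0, b0], which is eventually
   beyond the threshold of [dagger_v_large]. *)
Lemma fEta_eventually_x1 b0 : 0 < b0 < 1 ->
  exists eta0, 0 < eta0 /\ forall eta, eta0 <= eta -> forall x, 0 < x <= b0 -> f eta x = xs 1%nat.
Proof.
  intros Hb0; pose proof c_pos.
  destruct (dagger_v_large N xs vf N_pos grid_increasing vf_affine vf_const)
    as [P [HP HPv]]; [intros x Hx; apply vf_range; auto|].
  assert (Hcq : 0 < c * q_density M b0) by (apply Rmult_lt_0_compat; auto; apply q_density_pos).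
  exists (P / (c * q_density M b0)); split; [apply Rdiv_lt_0_compat; auto|].
  intros eta Heta x Hx; rewrite fEta_eq by lra; apply HPv.
  pose proof M_nonneg as HM.
  pose proof (q_density_antitone M x b0 HM ltac:(lra) ltac:(lra) ltac:(lra)).
  assert (P <= eta * (c * q_density M b0)).
  { apply Rmult_le_reg_r with (/ (c * q_density M b0)); [apply Rinv_0_lt_compat; auto|].
    rewrite Rmult_assoc, Rinv_r, Rmult_1_r by lra; auto. }
  assert (0 < eta) by (apply Rlt_le_trans with (P / (c * q_density M b0)); auto;
                       apply Rdiv_lt_0_compat; auto).
  rewrite Rmult_assoc; apply Rle_trans with (eta * (c * q_density M b0)); auto.
  apply Rmult_le_compat_l; [lra | apply Rmult_le_compat_l; lra].
Qed.

Lemma discounted_mean_excess eta : 0 < eta ->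
  exists J, discounted_mean v mu r sigma dt s C eta = e * xs 1%nat + J /\
    0 <= J <= e * (xs N - xs 1%nat) /\
    forall b0, 0 < b0 < 1 -> (forall x, 0 < x <= b0 -> f eta x = xs 1%nat) ->
      J <= e * (xs N - xs 1%nat) * (1 - Qfun M b0).
Proof.
  intros Heta; destruct (fEta_step eta Heta) as [Hstep Hr].
  apply (int01_weighted_step (map xs (seq 1 N)) (f eta) M e (xs 1%nat) (xs N)); auto; apply exp_pos.
Qed.

Lemma discounted_mean_le eta : 0 < eta -> discounted_mean v mu r sigma dt s C eta <= e * xs N.
Proof. intros Heta; destruct (discounted_mean_excess eta Heta) as [J [-> [[_ ?] _]]]; nra. Qed.

(* Only the [q]-mass of (b0, 1), where [f eta] may exceed [x1], contributes to the
   excess, and it vanishes as [b0 -> 1]. *)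
Lemma discounted_mean_cvg : lim_pinfty (discounted_mean v mu r sigma dt s C) (e * xs 1%nat).
Proof.
  intros eps Heps.
  assert (He : 0 < e) by apply exp_pos.
  assert (HxN : xs 1%nat <= xs N) by (eapply grid_le; eauto; lia).
  set (w := e * (xs N - xs 1%nat)).
  assert (Hw : 0 <= w) by (unfold w; nra).
  destruct (Qfun_near_1 M (eps / (w + 1))) as [d [Hd Hdb]]; [apply Rdiv_lt_0_compat; lra|].
  destruct (fEta_eventually_x1 (1 - d / 2)) as [eta0 [Heta0 Htail]]; [lra|].
  exists eta0; intros eta Heta.
  destruct (discounted_mean_excess eta ltac:(lra)) as [J [-> [HJ Hb0]]].
  pose proof (Hb0 (1 - d / 2) ltac:(lra) (Htail eta ltac:(lra))) as HJb; fold w in HJ, HJb.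
  pose proof (Hdb (1 - d / 2) ltac:(lra)).
  assert (w * (1 - Qfun M (1 - d / 2)) <= w * (eps / (w + 1))) by (apply Rmult_le_compat_l; lra).
  assert (w * (eps / (w + 1)) < eps).
  { apply Rmult_lt_reg_r with (w + 1); [lra|].
    replace (w * (eps / (w + 1)) * (w + 1)) with (w * eps) by (field; lra); nra. }
  replace (e * xs 1%nat + J - e * xs 1%nat) with J by ring.
  apply Rabs_def1; lra.
Qed.

Lemma gamma_slope_lower_bound eta : 0 < eta ->
  eta / (dt * (1 - s * (1 + vf (xs 1%nat)))) <= gamma_slope v mu r sigma dt s C eta.
Proof.
  intros Heta; destruct (fEta_step eta Heta) as [Hstep Hr].
  pose proof (int01_one_plus_step_bounds (map xs (seq 1 N)) (f eta) vf (xs 1%nat) (xs N)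
                Hstep Hr vf_range) as HI.
  unfold gamma_slope; fold (f eta); simpl.
  set (I := int01 (fun x => 1 + vf (f eta x))) in *.
  pose proof (vf_range (xs 1%nat) ltac:(lra)).
  assert (0 < 1 - s * I) by nra.
  assert (1 - s * I <= 1 - s * (1 + vf (xs 1%nat))) by nra.
  replace (- (eta / dt) * / (-1 + s * I)) with ((eta / dt) / (1 - s * I)) by (field; lra).
  unfold Rdiv; rewrite Rinv_mult, <- Rmult_assoc.
  apply Rmult_le_compat_l; [apply Rlt_le, Rdiv_lt_0_compat; lra|].
  apply Rinv_le_contravar; lra.
Qed.

Lemma gamma_slope_to_pinfty : to_pinfty_at_pinfty (gamma_slope v mu r sigma dt s C).
Proof.
  intros m; pose proof (vf_range (xs 1%nat) ltac:(lra)).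
  set (h := dt * (1 - s * (1 + vf (xs 1%nat)))).
  assert (Hh : 0 < h) by (unfold h; apply Rmult_lt_0_compat; nra).
  exists (Rmax 0 (m * h)); intros eta Heta.
  pose proof (Rmax_l 0 (m * h)); pose proof (Rmax_r 0 (m * h)).
  pose proof (gamma_slope_lower_bound eta ltac:(lra)) as Hlow; fold h in Hlow.
  assert (m < eta / h); [|lra].
  apply Rmult_lt_reg_r with h; auto.
  unfold Rdiv; rewrite Rmult_assoc, Rinv_l; lra.
Qed.

End LargeMultiplier.

Theorem mainTheorem11
  (mu r sigma dt s : R) (C N : nat) (xs : nat -> R) (vf : R -> R) (u : efun) :
  sigma > 0 -> dt > 0 ->
  0 < s < 1 ->
  (C = 0%nat \/ C = 1%nat) ->
  (* grid x_1 < ... < x_N *)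
  (1 <= N)%nat ->
  (forall i, (1 <= i)%nat -> (i < N)%nat -> xs i < xs (S i)) ->
  (* v : -oo below x_1, piecewise linear on the grid, constant above x_N *)
  let v := mkEfun (fun x => xs 1%nat <= x) vf in
  (forall i, (1 <= i)%nat -> (i < N)%nat -> forall x, xs i <= x <= xs (S i) ->
     vf x = vf (xs i) + (vf (xs (S i)) - vf (xs i)) / (xs (S i) - xs i) * (x - xs i)) ->
  (forall x, xs N <= x -> vf x = vf (xs N)) ->
  econcave v -> eincreasing v ->
  (forall x, xs 1%nat <= x -> vf x <= 0) ->
  (* u concave increasing, u^dagger finite and continuous on (0,oo), -> oo at 0 *)
  econcave u -> eincreasing u ->
  (forall p, p > 0 -> exists g, is_glb (fun x => superdiff u x p) g) ->
  (forall p, p > 0 -> continuity_pt (dagger u) p) ->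
  (forall K, exists d, d > 0 /\ forall p, 0 < p < d -> dagger u p > K) ->
  (* conclusion: lim_{eta -> oo} X^eta = gamma_min + s^C e^{-r dt} x_1 *)
  (forall gmin, is_glb (edom u) gmin ->
     lim_pinfty (XEta u v mu r sigma dt s C) (gmin + s ^ C * exp (- r * dt) * xs 1%nat)) /\
  ((forall m, exists x, edom u x /\ x < m) ->
     to_minfty_at_pinfty (XEta u v mu r sigma dt s C)).
Proof.
  intros Hsig Hdt Hs _ HN Hgrid v Hlin Hconst _ Hvi Hvneg _ Hui Hglb _ _.
  assert (Hvf : forall x, xs 1%nat <= x -> vf (xs 1%nat) <= vf x <= 0).
  { intros x Hx; split; [apply (Hvi (xs 1%nat) x Hx); simpl; lra | auto]. }
  assert (Hslope : to_pinfty_at_pinfty (gamma_slope v mu r sigma dt s C))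
    by (eapply gamma_slope_to_pinfty; eauto).
  rewrite XEta_split; split.
  - intros gmin Hgmin.
    replace (gmin + s ^ C * exp (- r * dt) * xs 1%nat)
      with (gmin + s ^ C * (exp (- r * dt) * xs 1%nat)) by ring.
    apply lim_pinfty_plus.
    + apply lim_pinfty_comp; auto; apply dagger_cvg_glb_dom; auto.
    + apply lim_pinfty_scal; eapply discounted_mean_cvg; eauto.
  - intros Hunb.
    apply to_minfty_plus_bounded with (s ^ C * (exp (- r * dt) * xs N)).
    + apply to_minfty_comp; auto; apply dagger_to_minfty; auto.
    + exists 0; intros eta Heta; apply Rmult_le_compat_l; [apply pow_le; lra|].
      eapply discounted_mean_le; eauto.
Qed.
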